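(* Let $X$ be a real Hilbert space with norm $\|\cdot\|_2$, identified with its dual, let $f\colon X\to\mathbb{R}$ be differentiable, let $L>0$, $N\ge1$, and take $\phi=\psi=\tfrac12\|\cdot\|_2^2$ (so $\nabla\phi^*=\nabla\psi^*=\mathrm{id}$). Let real coefficients $\{a_{k,i}\}_{0\le i<k\le N}$, $\{b_{k,i}\}_{0\le i\le k\le N}$ be given with $b_{0,0}=-1$ and \[ \sum_{j=0}^{k+1}b_{k+1,j}=0\qquad(k=0,\dots,N-1). \] Consider the CFOM: $y_0\in X$, $x_0=y_0$, $y_{k+1}=y_k-\sum_{i=0}^{k}a_{k+1,i}\nabla f(x_i)$, $x_{k+1}=x_k-\sum_{i=0}^{k+1}b_{k+1,i}y_i$; and its mirror dual: $q_0\in X$, $r_0=-b_{N,N}\nabla f(q_0)$, $q_{k+1}=q_k-\sum_{i=0}^{k}a_{N-i,N-1-k}r_i$, $r_{k+1}=r_k-\sum_{i=0}^{k+1}b_{N-i,N-1-k}\nabla f(q_i)$ ($k=0,\dots,N-1$). Then there exist real numbers $\{h_{k+1,i}\}_{0\le i\le k\le N-1}$, depending only on the coefficients $a,b$ and $L$, such that for every such $f$ and every starting point, the CFOM iterates satisfy \[ x_{k+1}=x_k-\frac1L\sum_{i=0}^{k}h_{k+1,i}\nabla f(x_i),\qquad k=0,\dots,N-1, \] and the mirror dual iterates satisfy \[ q_{k+1}=q_k-\frac1L\sum_{i=0}^{k}h_{N-i,N-1-k}\nabla f(q_i),\qquad k=0,\dots,N-1. \] That is, the two methods reduce to fixed-step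 first-order methods that are H-duals of each other.
   Context: A fixed-step first-order method (FSFOM) $x_{k+1}=x_k-\frac1L\sum_{i=0}^k h_{k+1,i}\nabla f(x_i)$ is identified with the lower-triangular $N\times N$ matrix $H$ with $H_{k+1,i+1}=h_{k+1,i}$ ($0\le i\le k\le N-1$), zero otherwise; its H-dual is the FSFOM given by the anti-diagonal transpose $H^A_{i,j}=H_{N-j+1,N-i+1}$, which is exactly the second recursion in the claim. *)

From HB Require Import structures.
From mathcomp Require Import all_boot all_order all_algebra.
From mathcomp Require Import all_classical all_reals all_analysis.
Set Implicit Arguments. Unset Strict Implicit. Unset Printing Implicit Defensive.
Import Order.TTheory GRing.Theory Num.Theory.
Import numFieldNormedType.Exports.
Local Open Scope ring_scope.

Definition hilbert_inner (R : realType) (X : normedModType R)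
  (dot : X -> X -> R) : Prop :=
  (forall x y : X, dot x y = dot y x) /\
  (forall (c : R) (x y z : X), dot (c *: x + y) z = c * dot x z + dot y z) /\
  (forall x : X, `|x| = Num.sqrt (dot x x)).

Definition is_gradient (R : realType) (X : normedModType R)
  (dot : X -> X -> R) (f : X -> R) (g : X -> X) : Prop :=
  forall x : X, differentiable f x /\ (forall v : X, 'd f x v = dot (g x) v).

From HB Require Import structures.
From mathcomp Require Import all_boot all_order all_algebra.
From mathcomp Require Import all_classical all_reals all_analysis.
From mathcomp Require Import zify.
Import Order.TTheory GRing.Theory Num.Theory.
Import numFieldNormedType.Exports.
Local Open Scope ring_scope.

(* Both methods are linear recursions driven by the gradients, so the claim is
   coefficient bookkeeping.  Unrolling y gives y_i = y_0 - sum_l c_{i,l} g_l with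
   c_{i,l} = sum_{l <= m < i} a_{m+1,l}; as the b_{k+1,.} sum to zero, y_0 drops
   out of x_{k+1} - x_k, which leaves the fixed steps
   h_{k+1,l} = -L sum_i b_{k+1,i} c_{i,l}.  Unrolling r (reading r_0 as a step
   from r_{-1} = 0) writes q_{k+1} - q_k with the same products a * b summed
   along reflected indices; the reflections i |-> N-1-i and m |-> N-m identify
   the coefficient of g(q_j) with h_{N-j,N-1-k}, the anti-transposed entry. *)

Lemma big_nat_reflect (V : nmodType) (F : nat -> V) (n i0 i1 : nat) :
  (i1 <= n)%N ->
  \sum_(i0 <= i < i1) F (n - i.+1)%N = \sum_(n - i1 <= i < n - i0) F i.
Proof.
elim: i1 => [|i1 IH] le_i1n; first by rewrite !big_geq ?subn0 ?leq_subr.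
have [le_i0i1|lt_i1i0] := leqP i0 i1; last by rewrite !big_geq //; lia.
rewrite big_nat_recr // (IH (ltnW le_i1n)) [RHS]big_ltn; last by lia.
by rewrite addrC; congr (_ + _); apply: congr_big_nat => //; lia.
Qed.

Lemma big_nat_triangle_exchange (R : comPzRingType) (alpha beta : nat -> R)
    (s n t : nat) :
  (t <= n)%N ->
  \sum_(s <= m < n) alpha m * \sum_(m.+1 <= p < t.+1) beta p
  = \sum_(0 <= p < t.+1) beta p * \sum_(s <= m < p) alpha m.
Proof.
move=> le_tn.
under eq_bigr do rewrite mulr_sumr (big_nat_widenl _ 0) //.
rewrite (exchange_big_dep_nat xpredT) //=; apply: eq_big_nat => p /andP[_ lt_pt].
rewrite mulr_sumr [RHS](big_nat_widen _ _ n) /=; last by lia.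
by apply: eq_bigr => m _; rewrite mulrC.
Qed.

Definition accum {R : pzRingType} (w : nat -> nat -> R) (n i : nat) : R :=
  \sum_(i <= m < n) w m i.

Section LinearRecursions.
Context {R : pzRingType} {V : lmodType R}.

Lemma accumS (w : nat -> nat -> R) (n i : nat) :
  accum w n.+1 i = accum w n i + (if (i <= n)%N then w n i else 0).
Proof.
rewrite /accum; case: leqP => [le_in | lt_ni]; first by rewrite big_nat_recr.
by rewrite !big_geq ?addr0 // ltnW.
Qed.

Lemma accum_unroll (w : nat -> nat -> R) (u v : nat -> V) (n M : nat) :
  (forall k, (k < n)%N -> u k.+1 = u k - \sum_(i < k.+1) w k i *: v i) ->
  (n <= M)%N ->
  u n = u 0%N - \sum_(i < M) accum w n i *: v i.
Proof.
elim: n => [|n IH] step le_nM.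
  by rewrite big1 ?subr0 // => i _; rewrite /accum big_geq ?scale0r.
rewrite step // (IH _ (ltnW le_nM)); last by move=> k lt_kn; apply/step/ltnW.
under [X in _ = _ - X]eq_bigr do rewrite accumS scalerDl.
rewrite big_split opprD addrA /=; congr (_ - _).
rewrite (big_ord_widen M (fun i => w n i *: v i) le_nM) big_mkcond /=.
by apply: eq_bigr => i _; rewrite ltnS; case: ifP; rewrite ?scale0r.
Qed.

Lemma sum_scaler_sum (I J : Type) (r : seq I) (s : seq J) (alpha : I -> R)
    (gamma : I -> J -> R) (v : J -> V) :
  \sum_(i <- r) alpha i *: \sum_(l <- s) gamma i l *: v l
  = \sum_(l <- s) (\sum_(i <- r) alpha i * gamma i l) *: v l.
Proof.
under eq_bigr do rewrite scaler_sumr.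
rewrite exchange_big /=; apply: eq_bigr => l _.
by rewrite scaler_suml; apply: eq_bigr => i _; rewrite scalerA.
Qed.

End LinearRecursions.

(* [accum (fun m => a m.+1) i l] is the coefficient c_{i,l} above, and the
   step sizes of the theorem are h_{k,l} = - L * fsfom_coef a b k l. *)
Definition fsfom_coef {R : pzRingType} (a b : nat -> nat -> R) (k l : nat) : R :=
  \sum_(i < k.+1) b k i * accum (fun m => a m.+1) i l.

Definition mirror_weight {R : pzRingType} (b : nat -> nat -> R) (N m j : nat) : R :=
  b (N - j)%N (N - m)%N.

Lemma fsfom_coef_mirror (R : comPzRingType) (a b : nat -> nat -> R) (N k j : nat) :
  (k < N)%N -> (j <= k)%N ->
  \sum_(i < k.+1) a (N - i)%N (N - 1 - k)%N * accum (mirror_weight b N) i.+1 j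
  = fsfom_coef a b (N - j) (N - 1 - k).
Proof.
move=> lt_kN le_jk; set l := (N - 1 - k)%N.
pose G m := a m.+1 l * \sum_(m.+1 <= p < (N - j).+1) b (N - j)%N p.
transitivity (\sum_(0 <= i < k.+1) G (N - i.+1)%N).
  rewrite big_mkord; apply: eq_bigr => i _; have lt_ik := ltn_ord i.
  rewrite /accum (eq_bigr (fun m => b (N - j)%N (N.+1 - m.+1)%N)) //.
  rewrite big_nat_reflect; last by lia.
  have -> : (N.+1 - i.+1 = (N - i.+1).+1)%N by lia.
  have -> : (N.+1 - j = (N - j).+1)%N by lia.
  by rewrite /G; congr (a _ l * _); lia.
rewrite big_nat_reflect // subn0 (_ : (N - k.+1 = l)%N); last by lia.
by rewrite big_nat_triangle_exchange ?leq_subr // big_mkord.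
Qed.

Section CFOM.
Context {R : pzRingType} {V : lmodType R} {a b : nat -> nat -> R} {N : nat}.
Context {x y d : nat -> V}.
Hypothesis sum_b_eq0 : forall k, (k < N)%N -> \sum_(j < k.+2) b k.+1 j = 0.
Hypothesis y_step : forall k, (k < N)%N ->
  y k.+1 = y k - \sum_(i < k.+1) a k.+1 i *: d i.
Hypothesis x_step : forall k, (k < N)%N ->
  x k.+1 = x k - \sum_(i < k.+2) b k.+1 i *: y i.

Lemma cfom_fsfom_step k : (k < N)%N ->
  x k.+1 = x k + \sum_(l < k.+1) fsfom_coef a b k.+1 l *: d l.
Proof.
move=> lt_kN.
have y_unroll (i : 'I_k.+2) :
    y i = y 0%N - \sum_(l < k.+1) accum (fun m => a m.+1) i l *: d l.
  have lt_ik := ltn_ord i.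
  by apply: accum_unroll => [m lt_mi|]; [apply: y_step |]; lia.
rewrite x_step //; under eq_bigr => i _ do rewrite y_unroll scalerBr.
by rewrite sumrB -scaler_suml sum_b_eq0 // scale0r sub0r opprK sum_scaler_sum.
Qed.

End CFOM.

Section MirrorDual.
Context {R : comPzRingType} {V : lmodType R} {a b : nat -> nat -> R} {N : nat}.
Context {q r d : nat -> V}.
Hypothesis r_start : r 0%N = - (b N N *: d 0%N).
Hypothesis q_step : forall k, (k < N)%N ->
  q k.+1 = q k - \sum_(i < k.+1) a (N - i)%N (N - 1 - k)%N *: r i.
Hypothesis r_step : forall k, (k < N)%N ->
  r k.+1 = r k - \sum_(i < k.+2) b (N - i)%N (N - 1 - k)%N *: d i.

Lemma mirror_residual_unroll i M : (i <= N)%N -> (i < M)%N ->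
  r i = - \sum_(j < M) accum (mirror_weight b N) i.+1 j *: d j.
Proof.
move=> le_iN lt_iM.
pose s n := if n is n'.+1 then r n' else 0.
rewrite -[r i]/(s i.+1) (accum_unroll (mirror_weight b N) s d _ _ _ lt_iM) ?sub0r //.
rewrite /mirror_weight => -[|k] lt_ki /=.
  by rewrite big_ord1 subn0 r_start sub0r.
rewrite r_step; last by lia.
by have -> : (N - 1 - k = N - k.+1)%N by lia.
Qed.

Lemma mirror_fsfom_step k : (k < N)%N ->
  q k.+1 = q k + \sum_(j < k.+1) fsfom_coef a b (N - j) (N - 1 - k) *: d j.
Proof.
move=> lt_kN.
have r_unroll (i : 'I_k.+1) :
    r i = - \sum_(j < k.+1) accum (mirror_weight b N) i.+1 j *: d j.
  by apply: mirror_residual_unroll; have := ltn_ord i; lia.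
rewrite q_step //; under eq_bigr => i _ do rewrite r_unroll scalerN.
rewrite sumrN opprK sum_scaler_sum.
by congr (_ + _); apply: eq_bigr => j _; rewrite fsfom_coef_mirror // -ltnS.
Qed.

End MirrorDual.

Theorem proposition5p1 (R : realType) (a b : nat -> nat -> R) (L : R) (N : nat) :
  0 < L -> (1 <= N)%N ->
  b 0%N 0%N = -1 ->
  (forall k : nat, (k < N)%N -> \sum_(j < k.+2) b k.+1 j = 0) ->
  exists h : nat -> nat -> R,
    forall (X : completeNormedModType R) (dot : X -> X -> R),
      hilbert_inner dot ->
      forall (f : X -> R) (g : X -> X), is_gradient dot f g ->
      (forall x y : nat -> X,
        x 0%N = y 0%N ->
        (forall k : nat, (k < N)%N ->
           y k.+1 = y k - \sum_(i < k.+1) a k.+1 i *: g (x i)) ->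
        (forall k : nat, (k < N)%N ->
           x k.+1 = x k - \sum_(i < k.+2) b k.+1 i *: y i) ->
        forall k : nat, (k < N)%N ->
           x k.+1 = x k - L^-1 *: \sum_(i < k.+1) h k.+1 i *: g (x i)) /\
      (forall q r : nat -> X,
        r 0%N = - (b N N *: g (q 0%N)) ->
        (forall k : nat, (k < N)%N ->
           q k.+1 = q k - \sum_(i < k.+1) a (N - i)%N (N - 1 - k)%N *: r i) ->
        (forall k : nat, (k < N)%N ->
           r k.+1 = r k - \sum_(i < k.+2) b (N - i)%N (N - 1 - k)%N *: g (q i)) ->
        forall k : nat, (k < N)%N ->
           q k.+1 = q k - L^-1 *: \sum_(i < k.+1) h (N - i)%N (N - 1 - k)%N *: g (q i)).
Proof.
move=> L_gt0 _ _ sum_b_eq0.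
have rescale (X : lmodType R) (I : Type) (s : seq I) (c : I -> R) (v : I -> X) :
    L^-1 *: \sum_(l <- s) (- L * c l) *: v l = - \sum_(l <- s) c l *: v l.
  under eq_bigr do rewrite -scalerA.
  by rewrite -scaler_sumr scalerA mulrN mulVf ?gt_eqF // scaleN1r.
exists (fun k l => - L * fsfom_coef a b k l) => X dot _ f g _; split.
- move=> x y _ y_step x_step k lt_kN.
  by rewrite (cfom_fsfom_step (d := g \o x) sum_b_eq0 y_step x_step) // rescale opprK.
- move=> q r r_start q_step r_step k lt_kN.
  by rewrite (mirror_fsfom_step (d := g \o q) r_start q_step r_step) // rescale opprK.
Qed.
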